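(* For all positive integers $n,m$, every closed knight tour on the $n\times m$ board is bi-sited.
   Context: The $n\times m$ board is $\{1,\dots,n\}\times\{1,\dots,m\}$; a knight moves from $(x,y)$ to $(x',y')$ iff $\{|x-x'|,|y-y'|\}=\{1,2\}$. A closed knight tour is a Hamiltonian cycle in the resulting graph. A pair of edges $((a_1,b_1),(a_2,b_2))$ and $((c_1,d_1),(c_2,d_2))$ of a tour is a \emph{site} if $(|a_1-c_1|,|b_1-d_1|)=(|a_2-c_2|,|b_2-d_2|)\in\{(0,2),(2,0)\}$ or $(|a_1-c_2|,|b_1-d_2|)=(|a_2-c_1|,|b_2-d_1|)\in\{(0,2),(2,0)\}$. A tour is \emph{bi-sited} if it contains two sites with disjoint support, i.e. such that the endpoints of the four edges involved are pairwise distinct. *)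

From mathcomp Require Import all_boot.
Set Implicit Arguments. Unset Strict Implicit. Unset Printing Implicit Defensive.

Definition square := (nat * nat)%type.

Definition on_board (n m : nat) (p : square) : bool :=
  (1 <= p.1 <= n) && (1 <= p.2 <= m).

Definition absd (a b : nat) : nat := (a - b) + (b - a).

Definition knight_move (p q : square) : bool :=
  let dx := absd p.1 q.1 in let dy := absd p.2 q.2 in
  ((dx == 1) && (dy == 2)) || ((dx == 2) && (dy == 1)).

(* A closed knight tour on the n x m board: a Hamiltonian cycle of the knight
   graph, given as the cyclic sequence of its vertices (at least 3, all
   distinct, exactly the squares of the board, consecutive ones -- including
   last and first -- adjacent). *)
Definition closed_knight_tour (n m : nat) (s : seq square) : Prop :=
  [/\ 2 < size s, uniq s,
      (forall p : square, on_board n m p <-> p \in s)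
    & cycle knight_move s].

Definition tour_step (s : seq square) (u v : square) : Prop :=
  exists i, i < size s /\ nth (0, 0) s i = u /\ nth (0, 0) s (i.+1 %% size s) = v.

Definition tour_edge (s : seq square) (u v : square) : Prop :=
  tour_step s u v \/ tour_step s v u.

Definition dvec (p q : square) : nat * nat := (absd p.1 q.1, absd p.2 q.2).
Definition site_vec (d : nat * nat) : bool := (d == (0, 2)) || (d == (2, 0)).

Definition is_site (a1 a2 c1 c2 : square) : bool :=
  ((dvec a1 c1 == dvec a2 c2) && site_vec (dvec a1 c1))
  || ((dvec a1 c2 == dvec a2 c1) && site_vec (dvec a1 c2)).

Definition bi_sited (s : seq square) : Prop :=
  exists a1 a2 c1 c2 e1 e2 g1 g2 : square,
    [/\ tour_edge s a1 a2 /\ tour_edge s c1 c2 /\ is_site a1 a2 c1 c2,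
        tour_edge s e1 e2 /\ tour_edge s g1 g2 /\ is_site e1 e2 g1 g2
      & uniq [:: a1; a2; c1; c2; e1; e2; g1; g2]].

From mathcomp Require Import all_boot zify.
Set Implicit Arguments. Unset Strict Implicit. Unset Printing Implicit Defensive.

(* A corner square a of the board has exactly two knight moves, so both are
   edges of every closed tour.  The square d two steps from a along a side
   shares one knight neighbour c with a; of the two tour edges at d at least
   one avoids c, and whichever endpoint it has, the edge is a translate by
   a -> d of a tour edge at a, i.e. the two edges form a site.  Corners that
   are far enough apart give sites with disjoint supports; on boards with both
   sides at most 5 a suitable pair of corners is found by inspection, the 3x3
   board having no tour at all since its centre is isolated. *)

Section NextInCycle.
Variables (T : eqType) (x0 : T) (s : seq T).
Hypothesis s_uniq : uniq s.

Lemma next_nth_mod i : i < size s -> next s (nth x0 s i) = nth x0 s (i.+1 %% size s).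
Proof.
move=> lt_i_s; rewrite next_nth mem_nth //.
case: s s_uniq lt_i_s => [|y p] // Us lt_i_s.
rewrite index_uniq //=; rewrite /= in lt_i_s.
case: (ltngtP i.+1 (size p).+1) => [lt_i_p|?|[->]]; [|lia|by rewrite modnn /= nth_default].
by rewrite modn_small //= (set_nth_default x0) // -ltnS.
Qed.

Lemma index_next x : x \in s -> index (next s x) s = (index x s).+1 %% size s.
Proof.
move=> s_x; have lt_i_s : index x s < size s by rewrite index_mem.
rewrite -{1}(nth_index x0 s_x) next_nth_mod // index_uniq //.
by rewrite ltn_mod; case: s s_x => [|].
Qed.

Lemma next_neq_prev x : 2 < size s -> x \in s -> next s x != prev s x.
Proof.
move=> s_gt2 s_x; apply/eqP => next_prev_x.
have: index (next s (next s x)) s = index x s by rewrite {1}next_prev_x next_prev.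
rewrite !index_next ?mem_next // -addn1 modnDml addn1 => /eqP.
have lt_i_s : index x s < size s by rewrite index_mem.
rewrite -[in X in _ == X](modn_small lt_i_s) -[X in _ == X %% _]addn0.
by rewrite -addn2 eqn_modDl mod0n modn_small.
Qed.

End NextInCycle.

Lemma knight_moveC p q : knight_move p q = knight_move q p.
Proof. by rewrite /knight_move /absd addnC [(p.2 - q.2) + _]addnC. Qed.

Section TourEdges.
Variable s : seq square.
Hypothesis s_uniq : uniq s.

Lemma tour_step_next p : p \in s -> tour_step s p (next s p).
Proof.
move=> s_p; exists (index p s).
by rewrite -next_nth_mod ?index_mem ?nth_index.
Qed.

Lemma tour_edge_prev p : p \in s -> tour_edge s p (prev s p).
Proof.
move=> s_p; right; have /tour_step_next : prev s p \in s by rewrite mem_prev.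
by rewrite next_prev.
Qed.

End TourEdges.

Definition knight_nbr n m (p q : square) := knight_move p q && on_board n m q.

Definition tour_site s (a1 a2 c1 c2 : square) :=
  tour_edge s a1 a2 /\ tour_edge s c1 c2 /\ is_site a1 a2 c1 c2.

Lemma bi_sited_of_sites s a1 a2 c1 c2 e1 e2 g1 g2 :
    tour_site s a1 a2 c1 c2 -> tour_site s e1 e2 g1 g2 ->
  uniq [:: a1; a2; c1; c2; e1; e2; g1; g2] -> bi_sited s.
Proof. by move=> site_a site_e; exists a1, a2, c1, c2, e1, e2, g1, g2. Qed.

(* The corner [a] has knight neighbours [b] and [c]; [d] is two squares away
   from [a] along a side and its knight moves lead to [c], [e], [f], [g], of
   which [f] and [g] may lie off the board. *)
Definition corner_sites n m s (a b c d e f g : square) :=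
  [\/ tour_site s a b d e, tour_site s a b d f /\ on_board n m f
    | tour_site s a c d g /\ on_board n m g].

Section ClosedTour.
Variables (n m : nat) (s : seq square).
Hypothesis tour : closed_knight_tour n m s.

Lemma knight_nbr_next p : on_board n m p -> knight_nbr n m p (next s p).
Proof.
case: tour => _ _ board_s cycle_s /board_s s_p.
by rewrite /knight_nbr (next_cycle cycle_s) //; apply/board_s; rewrite mem_next.
Qed.

Lemma knight_nbr_prev p : on_board n m p -> knight_nbr n m p (prev s p).
Proof.
case: tour => _ _ board_s cycle_s /board_s s_p.
rewrite /knight_nbr knight_moveC (prev_cycle cycle_s) //.
by apply/board_s; rewrite mem_prev.
Qed.

Lemma tour_two_nbrs p : on_board n m p ->
  exists q q', [/\ q != q', tour_edge s p q, tour_edge s p q',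
                   knight_nbr n m p q & knight_nbr n m p q'].
Proof.
case: (tour) => size_s uniq_s board_s _ board_p; have /board_s s_p := board_p.
exists (next s p), (prev s p).
split; [exact: next_neq_prev | left; exact: tour_step_next | exact: tour_edge_prev
       | exact: knight_nbr_next | exact: knight_nbr_prev].
Qed.

Lemma corner_sites_from_nbrs a b c d e f g :
    on_board n m a -> on_board n m d ->
    (forall q, knight_nbr n m a q -> (q == b) || (q == c)) ->
    (forall q, knight_nbr n m d q -> [|| q == c, q == e, q == f | q == g]) ->
    is_site a b d e -> (on_board n m f -> is_site a b d f) ->
    (on_board n m g -> is_site a c d g) ->
  corner_sites n m s a b c d e f g.
Proof.
move=> board_a board_d nbr_a nbr_d site_e site_f site_g.
have [edge_ab edge_ac] : tour_edge s a b /\ tour_edge s a c.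
  have [q [q' [neq_qq' edge_q edge_q' /nbr_a q_bc /nbr_a q'_bc]]] := tour_two_nbrs board_a.
  by move: q_bc q'_bc neq_qq'; do 2!case/orP=> /eqP ?; subst; rewrite ?eqxx.
have [q [edge_q nbr_q q_c]] : exists q, [/\ tour_edge s d q, knight_nbr n m d q & q != c].
  have [q [q' [neq_qq' edge_q edge_q' nbr_q nbr_q']]] := tour_two_nbrs board_d.
  case: (eqVneq q c) => [q_c|]; last by exists q.
  by exists q'; rewrite -?q_c 1?eq_sym.
have /andP[_ board_q] := nbr_q.
case/or4P: (nbr_d q nbr_q) q_c => /eqP ?; subst q; rewrite ?eqxx // => _.
- by constructor 1; do !split.
- by constructor 2; do !split => //; exact: site_f.
- by constructor 3; do !split => //; exact: site_g.
Qed.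

End ClosedTour.

Ltac board_lia :=
  try match goal with |- forall _ : square, _ => move=> [? ?] end;
  rewrite /is_site /knight_nbr /knight_move /on_board /dvec /site_vec /absd /= ?xpair_eqE;
  lia.

Lemma tour_board_gt2 n m s : closed_knight_tour n m s -> 0 < n -> 0 < m -> 2 < n /\ 2 < m.
Proof.
move=> tour n_gt0 m_gt0; have board_11 : on_board n m (1, 1) by board_lia.
have [[x y] [[x' y'] [neq_q _ _ nbr_q nbr_q']]] := tour_two_nbrs tour board_11.
by move: neq_q nbr_q nbr_q'; board_lia.
Qed.

Lemma no_closed_knight_tour_3x3 s : ~ closed_knight_tour 3 3 s.
Proof.
move=> tour; have := knight_nbr_next tour (p := (2, 2)) erefl.
by case: (next s _) => x y; board_lia.
Qed.

(* On small boards the truncated subtractions such as [n - 4] yield column 0,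
   which is off the board. *)
Section Corners.
Variables (n m : nat) (s : seq square).
Hypotheses (tour : closed_knight_tour n m s) (n_gt2 : 2 < n) (m_gt2 : 2 < m).

Ltac corner_sites_tac := by apply: (corner_sites_from_nbrs tour); board_lia.

Lemma corner_sites_11_x : corner_sites n m s (1,1) (3,2) (2,3) (3,1) (1,2) (5,2) (4,3).
Proof. corner_sites_tac. Qed.

Lemma corner_sites_11_y : corner_sites n m s (1,1) (2,3) (3,2) (1,3) (2,1) (2,5) (3,4).
Proof. corner_sites_tac. Qed.

Lemma corner_sites_1m_x :
  corner_sites n m s (1,m) (3,m-1) (2,m-2) (3,m) (1,m-1) (5,m-1) (4,m-2).
Proof. corner_sites_tac. Qed.

Lemma corner_sites_n1_y :
  corner_sites n m s (n,1) (n-1,3) (n-2,2) (n,3) (n-1,1) (n-1,5) (n-2,4).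
Proof. corner_sites_tac. Qed.

Lemma corner_sites_nm_x :
  corner_sites n m s (n,m) (n-2,m-1) (n-1,m-2) (n-2,m) (n,m-1) (n-4,m-1) (n-3,m-2).
Proof. corner_sites_tac. Qed.

Lemma corner_sites_nm_y :
  corner_sites n m s (n,m) (n-1,m-2) (n-2,m-1) (n,m-2) (n-1,m) (n-1,m-4) (n-2,m-3).
Proof. corner_sites_tac. Qed.

End Corners.

(* On a concrete board, [//=] discards the alternatives whose square is off it. *)
Ltac split_corner_sites S := case: S => [S|[S]|[S]]; rewrite /on_board //=.

Ltac sites_disjoint S S' :=
  apply: (bi_sited_of_sites S S');
  first [ done
        | rewrite /= !inE !negb_or; repeat (apply/andP; split); rewrite ?xpair_eqE; lia ].

Ltac disjoint_corner_sites S S' :=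
  split_corner_sites S; split_corner_sites S'; move=> *; sites_disjoint S S'.

Theorem proposition4p2 (n m : nat) (s : seq square) :
  0 < n -> 0 < m -> closed_knight_tour n m s -> bi_sited s.
Proof.
move=> n_gt0 m_gt0 tour; have [n_gt2 m_gt2] := tour_board_gt2 tour n_gt0 m_gt0.
have c11x := corner_sites_11_x tour n_gt2 m_gt2.
have c11y := corner_sites_11_y tour n_gt2 m_gt2.
have c1mx := corner_sites_1m_x tour n_gt2 m_gt2.
have cn1y := corner_sites_n1_y tour n_gt2 m_gt2.
have cnmx := corner_sites_nm_x tour n_gt2 m_gt2.
have cnmy := corner_sites_nm_y tour n_gt2 m_gt2.
have [m_ge6|m_le5] := leqP 6 m; first by disjoint_corner_sites c11x cnmx.
have [n_ge6|n_le5] := leqP 6 n; first by disjoint_corner_sites c11y cnmy.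
have [En|[En|En]] : n = 3 \/ n = 4 \/ n = 5 by lia.
all: have [Em|[Em|Em]] : m = 3 \/ m = 4 \/ m = 5 by lia.
all: subst n m.
- by case: (no_closed_knight_tour_3x3 tour).
- by disjoint_corner_sites c11x cnmx.
- by disjoint_corner_sites c11x cnmx.
- by disjoint_corner_sites c11y cnmy.
- by disjoint_corner_sites c11x c1mx.
- by disjoint_corner_sites c11x cnmx.
- by disjoint_corner_sites c11y cnmy.
- by disjoint_corner_sites c11x cnmx.
- split_corner_sites c11x; split_corner_sites c11y; split_corner_sites c1mx;
    split_corner_sites cn1y; move=> *.
  all: first [ sites_disjoint c11x c11y | sites_disjoint c11x c1mx | sites_disjoint c11x cn1y
             | sites_disjoint c11y c1mx | sites_disjoint c11y cn1y | sites_disjoint c1mx cn1y ].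
Qed.
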